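(* Let $n\ge3$, $1<k<n/2$, $p>\frac{nk}{n-2k}$, and let $u$ be a regular solution of (1.6). Then $u'(r)<0$ for all $r>0$, $u(r)\to0$ as $r\to\infty$, and there are constants $C_1,C_2>0$ such that for all sufficiently large $r$, $$C_1r^{-\frac{n-2k}{k}}\le u(r)\le C_2r^{-\frac{2k}{p-k}}.$$
   Context: Problem (1.6) is: given $\rho>0$, find $u$ with $-\tfrac{1}{k}C_{n-1}^{k-1}(r^{n-k}|u'|^{k-1}u')'=r^{n-1}u^{p}$, $u(r)>0$ for all $r>0$, $u'(0)=0$, $u(0)=\rho$, where $C_{n-1}^{k-1}$ is the binomial coefficient. A solution $u$ of (1.6) is regular if $x\mapsto u(|x|)$ belongs to $C^2(\mathbb{R}^n)$. *)

From Stdlib Require Import Reals Lra Lia Arith.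
Open Scope R_scope.

(* Points of R^n are represented as x : nat -> R; only coordinates 0..n-1
   matter (all functions below only look at those). *)

Definition normn (n : nat) (x : nat -> R) : R :=
  sqrt (sum_f_R0 (fun i => x i ^ 2) (n - 1)).  (* used only with n >= 3 *)

Definition distn (n : nat) (x y : nat -> R) : R :=
  normn n (fun i => x i - y i).

Definition shift (x : nat -> R) (i : nat) (t : R) : nat -> R :=
  fun j => if Nat.eqb j i then x j + t else x j.

Definition partial_lim (f : (nat -> R) -> R) (i : nat) (x : nat -> R) (l : R) : Prop :=
  derivable_pt_lim (fun t => f (shift x i t)) 0 l.

Definition contn (n : nat) (g : (nat -> R) -> R) : Prop :=
  forall x eps, 0 < eps -> exists delta, 0 < delta /\
    forall y, distn n x y < delta -> Rabs (g y - g x) < eps.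

Definition C1n (n : nat) (f : (nat -> R) -> R) : Prop :=
  contn n f /\
  exists D : nat -> (nat -> R) -> R,
    (forall i, (i < n)%nat -> forall x, partial_lim f i x (D i x)) /\
    (forall i, (i < n)%nat -> contn n (D i)).

Definition C2n (n : nat) (f : (nat -> R) -> R) : Prop :=
  contn n f /\
  exists D : nat -> (nat -> R) -> R,
    (forall i, (i < n)%nat -> forall x, partial_lim f i x (D i x)) /\
    (forall i, (i < n)%nat -> C1n n (D i)).

Definition right_deriv (f : R -> R) (x l : R) : Prop :=
  forall eps, 0 < eps -> exists delta, 0 < delta /\
    forall h, 0 < h < delta -> Rabs ((f (x + h) - f x) / h - l) < eps.

Definition solves_1_6 (n k : nat) (p rho : R) (u u' : R -> R) : Prop :=
  (forall r, 0 < r -> derivable_pt_lim u r (u' r)) /\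
  right_deriv u 0 (u' 0) /\
  (forall r, 0 < r ->
     exists d,
       derivable_pt_lim (fun s => s ^ (n - k) * Rabs (u' s) ^ (k - 1) * u' s) r d /\
       - (1 / INR k) * C (n - 1) (k - 1) * d = r ^ (n - 1) * Rpower (u r) p) /\
  (forall r, 0 < r -> 0 < u r) /\
  u' 0 = 0 /\
  u 0 = rho.

Definition regular (n : nat) (u : R -> R) : Prop :=
  C2n n (fun x => u (normn n x)).

(* With the flux W(r) = r^(n-k) |u'|^(k-1) u', equation (1.6) reads
   W' = -kappa r^(n-1) u^p with kappa = k / C(n-1,k-1) > 0, so W decreases.
   If u'(r0) >= 0 then W >= c > 0 on (0, r0/2], i.e. u' >= c^(1/k) r^(-(n-k)/k),
   which is not integrable at 0 because n > 2k: u would become negative near 0.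
   Hence u' < 0, and W(r) <= W(1) < 0 for r >= 1 gives -u' >= m r^(-(n-k)/k);
   integrating up to infinity yields the lower bound.  Since u decreases,
   comparing W(r) with the integral of kappa s^(n-1) u(r)^p over (0, r) gives
   W(r) <= -(kappa/n) u(r)^p r^n, i.e. -u' >= E u^(p/k) r; then u^(-(p-k)/k)
   grows at least quadratically, which is the upper bound. *)

From Stdlib Require Import Reals Lra Lia.
Open Scope R_scope.

Lemma Rpower_pos (x y : R) : 0 < Rpower x y.
Proof. apply exp_pos. Qed.

Lemma Rpower_inv_pow (x e : R) : 0 < x -> e <> 0 -> Rpower (Rpower x (/ e)) e = x.
Proof. intros Hx He. rewrite Rpower_mult, Rinv_l by exact He. apply Rpower_1, Hx. Qed.

Lemma Rpower_lt_base_neg (s t e : R) : 0 < s < t -> e < 0 -> Rpower t e < Rpower s e.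
Proof.
  intros Hst He. replace e with (- - e) by ring. rewrite !(Rpower_Ropp _ (- e)).
  apply Rinv_lt_contravar; [apply Rmult_lt_0_compat; apply Rpower_pos|].
  apply Rlt_Rpower_l; lra.
Qed.

Lemma Rpower_le_base_neg (s t e : R) : 0 < s <= t -> e < 0 -> Rpower t e <= Rpower s e.
Proof.
  intros [Hs [Hst | <-]] He; [left; apply Rpower_lt_base_neg; lra | lra].
Qed.

Lemma Rpower_neg_vanishes (e eps : R) : e < 0 -> 0 < eps ->
  exists T, 0 < T /\ forall t, T < t -> Rpower t e < eps.
Proof.
  intros He Heps. exists (Rpower eps (/ e)). split; [apply Rpower_pos|].
  intros t Ht. rewrite <- (Rpower_inv_pow eps e) by lra.
  apply Rpower_lt_base_neg; [split; [apply Rpower_pos | exact Ht] | exact He].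
Qed.

Lemma vanishes_of_le_neg_power (f : R -> R) (c e R0 : R) : 0 < c -> e < 0 ->
  (forall r, R0 < r -> 0 < f r <= c * Rpower r e) ->
  forall eps, 0 < eps -> exists R1, forall r, R1 < r -> Rabs (f r) < eps.
Proof.
  intros Hc He Hf eps Heps.
  destruct (Rpower_neg_vanishes e (eps / c) He ltac:(apply Rdiv_lt_0_compat; lra))
    as [T [HT Hsmall]].
  exists (Rmax R0 T). intros r Hr.
  pose proof (Rmax_l R0 T). pose proof (Rmax_r R0 T).
  destruct (Hf r ltac:(lra)) as [Hpos Hle].
  rewrite Rabs_pos_eq by lra.
  apply (Rle_lt_trans _ _ _ Hle).
  replace eps with (c * (eps / c)) by (field; lra).
  apply Rmult_lt_compat_l; [exact Hc | apply Hsmall; lra].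
Qed.

Lemma Rpower_neg_unbounded_at_0 (e r M : R) : e < 0 -> 0 < r ->
  exists s, 0 < s < r /\ M < Rpower s e.
Proof.
  intros He Hr. set (X := Rabs M + 1).
  assert (HX : 0 < X) by (unfold X; pose proof (Rabs_pos M); lra).
  exists (Rmin (r / 2) (Rpower X (/ e))).
  assert (Hs : 0 < Rmin (r / 2) (Rpower X (/ e)))
    by (apply Rmin_pos; [lra | apply Rpower_pos]).
  split; [split; [exact Hs | pose proof (Rmin_l (r / 2) (Rpower X (/ e))); lra]|].
  apply (Rlt_le_trans _ X); [unfold X; pose proof (Rle_abs M); lra|].
  rewrite <- (Rpower_inv_pow X e) at 1 by lra.
  apply Rpower_le_base_neg; [split; [exact Hs | apply Rmin_r] | exact He].
Qed.

Lemma Rpower_inv_le (a x : R) (k : nat) : (0 < k)%nat -> 0 < a -> 0 < x ->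
  a <= x ^ k -> Rpower a (/ INR k) <= x.
Proof.
  intros Hk Ha Hx H. rewrite <- Rpower_pow in H by exact Hx.
  assert (HK : 0 < INR k) by (apply lt_0_INR; lia).
  replace x with (Rpower (Rpower x (INR k)) (/ INR k))
    by (rewrite Rpower_mult, Rinv_r by lra; apply Rpower_1, Hx).
  apply Rle_Rpower_l; [left; apply Rinv_0_lt_compat, HK | lra].
Qed.

Lemma Rpower_inv_le_weighted (c s x : R) (j k : nat) :
  (0 < k)%nat -> 0 < c -> 0 < s -> 0 < x ->
  c <= s ^ j * x ^ k -> Rpower c (/ INR k) * Rpower s (- INR j / INR k) <= x.
Proof.
  intros Hk Hc Hs Hx H.
  assert (Hsj : 0 < s ^ j) by (apply pow_lt, Hs).
  replace (Rpower s (- INR j / INR k)) with (Rpower (/ s ^ j) (/ INR k)).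
  - rewrite Rpower_mult_distr by (try apply Rinv_0_lt_compat; assumption).
    apply Rpower_inv_le; [exact Hk | apply Rdiv_lt_0_compat; assumption | exact Hx |].
    apply (Rmult_le_reg_l (s ^ j)); [exact Hsj|]. field_simplify; lra.
  - rewrite <- Rpower_pow, <- Rpower_Ropp, Rpower_mult by exact Hs.
    reflexivity.
Qed.

Lemma Rpower_mul_pow_inv (c x : R) (k : nat) : (0 < k)%nat -> 0 < c -> 0 < x ->
  Rpower (c * x ^ k) (/ INR k) = Rpower c (/ INR k) * x.
Proof.
  intros Hk Hc Hx. rewrite <- Rpower_mult_distr by (try apply pow_lt; assumption).
  rewrite <- Rpower_pow, Rpower_mult, Rinv_r, Rpower_1 by (try apply not_0_INR; lia || lra).
  reflexivity.
Qed.

Lemma pow_le_self (s : R) (m : nat) : (0 < m)%nat -> 0 <= s <= 1 -> s ^ m <= s.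
Proof.
  intros Hm Hs. replace m with (S (m - 1)) by lia. simpl.
  pose proof (pow_incr s 1 (m - 1) Hs) as Hle. rewrite pow1 in Hle. nra.
Qed.

Lemma pow_pred_mul (x : R) (k : nat) : (0 < k)%nat -> x ^ (k - 1) * x = x ^ k.
Proof. intros Hk. destruct k as [|j]; [lia|]. simpl. rewrite Nat.sub_0_r. ring. Qed.

Lemma deriv_nonpos_le (f f' : R -> R) (a b : R) : a <= b ->
  (forall x, a <= x <= b -> derivable_pt_lim f x (f' x)) ->
  (forall x, a <= x <= b -> f' x <= 0) -> f b <= f a.
Proof.
  intros [Hab | <-] Hd Hf'; [|lra].
  destruct (MVT_cor2 f f' a b Hab Hd) as [c [Hc Hac]].
  assert (f' c <= 0) by (apply Hf'; lra). nra.
Qed.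

Lemma deriv_nonneg_le (f f' : R -> R) (a b : R) : a <= b ->
  (forall x, a <= x <= b -> derivable_pt_lim f x (f' x)) ->
  (forall x, a <= x <= b -> 0 <= f' x) -> f a <= f b.
Proof.
  intros [Hab | <-] Hd Hf'; [|lra].
  destruct (MVT_cor2 f f' a b Hab Hd) as [c [Hc Hac]].
  assert (0 <= f' c) by (apply Hf'; lra). nra.
Qed.

Lemma deriv_neg_lt (f f' : R -> R) (a b : R) : a < b ->
  (forall x, a <= x <= b -> derivable_pt_lim f x (f' x)) ->
  (forall x, a <= x <= b -> f' x < 0) -> f b < f a.
Proof.
  intros Hab Hd Hf'. destruct (MVT_cor2 f f' a b Hab Hd) as [c [Hc Hac]].
  assert (f' c < 0) by (apply Hf'; lra). nra.
Qed.

Lemma derivable_pt_lim_Rpower_primitive (m q x : R) : q <> -1 -> 0 < x ->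
  derivable_pt_lim (fun y => m / (q + 1) * Rpower y (q + 1)) x (m * Rpower x q).
Proof.
  intros Hq Hx.
  replace (m * Rpower x q) with (m / (q + 1) * ((q + 1) * Rpower x (q + 1 - 1)))
    by (replace (q + 1 - 1) with q by ring; field; lra).
  apply (derivable_pt_lim_scal (fun y => Rpower y (q + 1))), derivable_pt_lim_power, Hx.
Qed.

Lemma C_pos (n k : nat) : 0 < C n k.
Proof.
  apply Rdiv_lt_0_compat; [|apply Rmult_lt_0_compat]; apply INR_fact_lt_0.
Qed.

Lemma deriv_ge_power_unbounded_below (f f' : R -> R) (r m q M : R) :
  0 < r -> 0 < m -> q < -1 ->
  (forall x, 0 < x <= r -> derivable_pt_lim f x (f' x)) ->
  (forall x, 0 < x <= r -> m * Rpower x q <= f' x) ->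
  exists s, 0 < s < r /\ f s < M.
Proof.
  intros Hr Hm Hq Hd Hf'.
  set (a := m / (q + 1)).
  assert (Ha : a < 0) by (apply Rdiv_pos_neg; lra).
  set (G := fun x => f x - a * Rpower x (q + 1)).
  destruct (Rpower_neg_unbounded_at_0 (q + 1) r ((M - G r) / a) ltac:(lra) Hr)
    as [s [Hs Hbig]].
  exists s. split; [exact Hs|].
  assert (HG : G s <= G r).
  { apply (deriv_nonneg_le G (fun x => f' x - m * Rpower x q)); [lra| |].
    - intros x Hx. apply derivable_pt_lim_minus; [apply Hd; lra|].
      apply derivable_pt_lim_Rpower_primitive; lra.
    - intros x Hx. pose proof (Hf' x ltac:(lra)). lra. }
  assert (a * Rpower s (q + 1) < M - G r).
  { replace (M - G r) with (a * ((M - G r) / a)) by (field; lra).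
    apply Rmult_lt_gt_compat_neg_l; assumption. }
  unfold G in HG at 1. lra.
Qed.

Lemma deriv_le_neg_power_lower_bound (f f' : R -> R) (b m q : R) :
  0 < b -> 0 < m -> q < -1 ->
  (forall x, b <= x -> derivable_pt_lim f x (f' x)) ->
  (forall x, b <= x -> f' x <= - (m * Rpower x q)) ->
  (forall x, b <= x -> 0 < f x) ->
  forall r, b <= r -> m / - (q + 1) * Rpower r (q + 1) <= f r.
Proof.
  intros Hb Hm Hq Hd Hf' Hpos r Hr.
  set (a := m / (q + 1)).
  assert (Ha : a < 0) by (apply Rdiv_pos_neg; lra).
  set (F := fun x => f x + a * Rpower x (q + 1)).
  assert (HF : forall t, r <= t -> F t <= F r).
  { intros t Ht. apply (deriv_nonpos_le F (fun x => f' x + m * Rpower x q)); [lra| |].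
    - intros x Hx. apply derivable_pt_lim_plus; [apply Hd; lra|].
      apply derivable_pt_lim_Rpower_primitive; lra.
    - intros x Hx. pose proof (Hf' x ltac:(lra)). lra. }
  replace (m / - (q + 1)) with (- a) by (unfold a; field; lra).
  destruct (Rle_or_lt 0 (F r)) as [H0 | Hneg]; [unfold F in H0; lra|].
  exfalso.
  destruct (Rpower_neg_vanishes (q + 1) (F r / a) ltac:(lra)
              ltac:(apply Rdiv_neg_neg; assumption)) as [T [HT Hsmall]].
  set (t := Rmax T r + 1).
  assert (Htr : r <= t) by (unfold t; pose proof (Rmax_r T r); lra).
  pose proof (Hsmall t ltac:(unfold t; pose proof (Rmax_l T r); lra)).
  pose proof (Hpos t ltac:(lra)).
  assert (HFt : F t <= F r) by (apply HF, Htr). unfold F at 1 in HFt.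
  assert (F r < a * Rpower t (q + 1)).
  { replace (F r) with (a * (F r / a)) by (field; lra).
    apply Rmult_lt_gt_compat_neg_l; assumption. }
  lra.
Qed.

Lemma deriv_le_neg_superlinear_upper_bound (f f' : R -> R) (E a : R) :
  0 < E -> 1 < a ->
  (forall x, 1 <= x -> derivable_pt_lim f x (f' x)) ->
  (forall x, 1 <= x -> 0 < f x) ->
  (forall x, 1 <= x -> E * Rpower (f x) a * x <= - f' x) ->
  forall r, 2 <= r ->
    f r <= Rpower ((a - 1) * E / 4) (- / (a - 1)) * Rpower r (- (2 / (a - 1))).
Proof.
  intros HE Ha Hd Hpos Hf' r Hr.
  set (b := a - 1). assert (Hb : 0 < b) by (unfold b; lra).
  set (V := fun x => Rpower (f x) (- b)).
  set (Phi := fun x => V x - b * E / 2 * x ^ 2).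
  assert (HPhi : Phi 1 <= Phi r).
  { apply (deriv_nonneg_le Phi
             (fun x => - b * Rpower (f x) (- b - 1) * f' x - b * E * x)); [lra| |].
    - intros x Hx. apply derivable_pt_lim_minus.
      + apply (derivable_pt_lim_comp f (fun y => Rpower y (- b))); [apply Hd; lra|].
        apply derivable_pt_lim_power, Hpos; lra.
      + replace (b * E * x) with (b * E / 2 * (INR 2 * x ^ Nat.pred 2))
          by (simpl; field).
        apply (derivable_pt_lim_scal (fun y => y ^ 2)), derivable_pt_lim_pow.
    - intros x Hx.
      assert (Hcancel : Rpower (f x) (- b - 1) * (E * Rpower (f x) a * x) = E * x).
      { replace (Rpower (f x) (- b - 1) * (E * Rpower (f x) a * x))
          with (E * x * (Rpower (f x) (- b - 1) * Rpower (f x) a)) by ring.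
        rewrite <- Rpower_plus. replace (- b - 1 + a) with 0 by (unfold b; ring).
        rewrite Rpower_O by (apply Hpos; lra). ring. }
      assert (Hw : 0 <= b * Rpower (f x) (- b - 1))
        by (left; apply Rmult_lt_0_compat, Rpower_pos; lra).
      pose proof (Rmult_le_compat_l _ _ _ Hw (Hf' x ltac:(lra))) as Hle.
      rewrite Rmult_assoc, Hcancel in Hle. lra. }
  assert (HVr : b * E / 4 * r ^ 2 <= V r).
  { assert (0 < V 1) by apply Rpower_pos.
    assert (0 < b * E) by (apply Rmult_lt_0_compat; lra).
    assert (0 <= b * E * (r ^ 2 - 2)) by (apply Rmult_le_pos; simpl; nra).
    unfold Phi in HPhi. simpl pow in *. lra. }
  assert (Hbr : 0 < b * E / 4 * r ^ 2)
    by (apply Rmult_lt_0_compat; [|apply pow_lt]; nra).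
  replace (f r) with (Rpower (V r) (- / b)).
  2: { unfold V. rewrite Rpower_mult. replace (- b * - / b) with 1 by (field; lra).
       apply Rpower_1, Hpos; lra. }
  eapply Rle_trans.
  - apply Rpower_le_base_neg; [split; [exact Hbr | exact HVr] |].
    apply Ropp_lt_gt_0_contravar, Rinv_0_lt_compat, Hb.
  - rewrite <- Rpower_mult_distr, <- Rpower_pow, Rpower_mult by nra.
    apply Req_le. fold b. f_equal. f_equal. simpl INR. field. lra.
Qed.

Section RadialSolution.

Variables (n k : nat) (p kappa : R) (u u' : R -> R).

Hypothesis k_pos : (0 < k)%nat.
Hypothesis double_k_lt_n : (2 * k < n)%nat.
Hypothesis kappa_pos : 0 < kappa.
Hypothesis u_deriv : forall r, 0 < r -> derivable_pt_lim u r (u' r).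
Hypothesis u_pos : forall r, 0 < r -> 0 < u r.

Definition flux (r : R) : R := r ^ (n - k) * Rabs (u' r) ^ (k - 1) * u' r.

Hypothesis flux_deriv : forall r, 0 < r ->
  derivable_pt_lim flux r (- kappa * r ^ (n - 1) * Rpower (u r) p).

Lemma flux_exponent_lt : - INR (n - k) / INR k < -1.
Proof.
  assert (HK : 0 < INR k) by (apply lt_0_INR; lia).
  assert (INR k < INR (n - k)) by (apply lt_INR; lia).
  apply (Rmult_lt_reg_r (INR k)); [exact HK|]. field_simplify; lra.
Qed.

Lemma flux_nonneg_eq r : 0 <= u' r -> flux r = r ^ (n - k) * u' r ^ k.
Proof.
  intros Hu'. unfold flux.
  rewrite Rabs_pos_eq, Rmult_assoc, pow_pred_mul by (exact Hu' || exact k_pos).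
  reflexivity.
Qed.

Lemma flux_nonpos_eq r : u' r <= 0 -> flux r = - (r ^ (n - k) * (- u' r) ^ k).
Proof.
  intros Hu'. unfold flux.
  rewrite Rabs_left1, <- (pow_pred_mul (- u' r) k k_pos) by exact Hu'. ring.
Qed.

Lemma flux_decreasing s t : 0 < s < t -> flux t < flux s.
Proof.
  intros Hst. apply (deriv_neg_lt flux (fun r => - kappa * r ^ (n - 1) * Rpower (u r) p));
    [lra | intros x Hx; apply flux_deriv; lra |].
  intros x Hx.
  assert (0 < x ^ (n - 1) * Rpower (u x) p)
    by (apply Rmult_lt_0_compat, Rpower_pos; apply pow_lt; lra).
  nra.
Qed.

Lemma flux_pos_deriv_pos r : 0 < r -> 0 < flux r -> 0 < u' r.
Proof.
  intros Hr Hf. destruct (Rlt_or_le 0 (u' r)) as [| Hle]; [assumption|].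
  rewrite flux_nonpos_eq in Hf by exact Hle.
  assert (0 <= r ^ (n - k) * (- u' r) ^ k)
    by (apply Rmult_le_pos; apply pow_le; lra).
  lra.
Qed.

Lemma u_deriv_neg r : 0 < r -> u' r < 0.
Proof.
  intros Hr. destruct (Rlt_or_le (u' r) 0) as [| Hge]; [assumption|]. exfalso.
  set (c := flux (r / 2)).
  assert (Hc : 0 < c).
  { assert (Hlt : flux r < c) by (apply flux_decreasing; lra).
    rewrite flux_nonneg_eq in Hlt by exact Hge.
    assert (0 <= r ^ (n - k) * u' r ^ k) by (apply Rmult_le_pos; apply pow_le; lra).
    lra. }
  destruct (deriv_ge_power_unbounded_below u u' (r / 2) (Rpower c (/ INR k))
              (- INR (n - k) / INR k) 0) as [s [Hs Hus]].
  - lra.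
  - apply Rpower_pos.
  - apply flux_exponent_lt.
  - intros x Hx. apply u_deriv. lra.
  - intros x Hx.
    assert (Hcx : c <= flux x).
    { destruct (Req_dec x (r / 2)) as [-> | Hne]; [unfold c; lra|].
      left. apply flux_decreasing. lra. }
    assert (Hux : 0 < u' x) by (apply flux_pos_deriv_pos; lra).
    rewrite flux_nonneg_eq in Hcx by lra.
    apply Rpower_inv_le_weighted; lra || assumption.
  - pose proof (u_pos s ltac:(lra)). lra.
Qed.

Lemma u_antitone x r : 0 < x <= r -> u r <= u x.
Proof.
  intros Hx. apply (deriv_nonpos_le u u'); [lra | intros y Hy; apply u_deriv; lra |].
  intros y Hy. left. apply u_deriv_neg. lra.
Qed.

Lemma flux_le_neg_pow (r : R) : 0 <= p -> 0 < r ->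
  flux r <= - (kappa / INR n * Rpower (u r) p * r ^ n).
Proof.
  intros Hp Hr.
  assert (HN : 0 < INR n) by (apply lt_0_INR; lia).
  set (D := kappa / INR n * Rpower (u r) p).
  assert (HD : 0 < D)
    by (apply Rmult_lt_0_compat; [apply Rdiv_lt_0_compat |]; apply Rpower_pos || lra).
  set (g := fun x => flux x + D * x ^ n).
  assert (Hg : forall s, 0 < s <= r -> g r <= g s).
  { intros s Hs.
    apply (deriv_nonpos_le g (fun x => - kappa * x ^ (n - 1) * Rpower (u x) p
                                      + D * (INR n * x ^ Nat.pred n))); [lra| |].
    - intros x Hx. apply derivable_pt_lim_plus; [apply flux_deriv; lra|].
      apply (derivable_pt_lim_scal (fun y => y ^ n)), derivable_pt_lim_pow.
    - intros x Hx. replace (Nat.pred n) with (n - 1)%nat by lia.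
      assert (Rpower (u r) p <= Rpower (u x) p)
        by (apply Rle_Rpower_l; [exact Hp | split; [apply u_pos | apply u_antitone]; lra]).
      assert (0 < kappa * x ^ (n - 1)) by (apply Rmult_lt_0_compat, pow_lt; lra).
      replace (D * (INR n * x ^ (n - 1))) with (kappa * x ^ (n - 1) * Rpower (u r) p)
        by (unfold D; field; lra).
      nra. }
  destruct (Rle_or_lt (g r) 0) as [Hle | Hgr]; [unfold g in Hle; lra|]. exfalso.
  set (s := Rmin (r / 2) (Rmin 1 (g r / (D + 1)))).
  assert (Hs0 : 0 < s)
    by (apply Rmin_pos; [| apply Rmin_pos; [| apply Rdiv_lt_0_compat]]; lra).
  assert (Hsr : s <= r / 2) by apply Rmin_l.
  assert (Hs1 : s <= 1) by (eapply Rle_trans; [apply Rmin_r | apply Rmin_l]).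
  assert (Hsg : s <= g r / (D + 1)) by (eapply Rle_trans; [apply Rmin_r | apply Rmin_r]).
  assert (Hflux : flux s < 0).
  { rewrite flux_nonpos_eq by (left; apply u_deriv_neg; lra).
    pose proof (u_deriv_neg s Hs0).
    assert (0 < s ^ (n - k) * (- u' s) ^ k) by (apply Rmult_lt_0_compat; apply pow_lt; lra).
    lra. }
  assert (D * s ^ n <= D * s) by (apply Rmult_le_compat_l, pow_le_self; lra || lia).
  assert (D * s < g r).
  { apply (Rle_lt_trans _ (D * (g r / (D + 1)))); [apply Rmult_le_compat_l; lra|].
    apply (Rmult_lt_reg_r (D + 1)); [lra|]. field_simplify; nra. }
  assert (Hgs : g r <= g s) by (apply Hg; lra). unfold g at 2 in Hgs. lra.
Qed.

Lemma neg_u_deriv_ge (r : R) : 0 <= p -> 0 < r ->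
  Rpower (kappa / INR n) (/ INR k) * Rpower (u r) (p / INR k) * r <= - u' r.
Proof.
  intros Hp Hr. pose proof (u_deriv_neg r Hr) as Hneg.
  assert (HK : 0 < INR k) by (apply lt_0_INR; lia).
  assert (HN : 0 < INR n) by (apply lt_0_INR; lia).
  set (c := kappa / INR n * Rpower (u r) p).
  assert (Hc : 0 < c)
    by (apply Rmult_lt_0_compat; [apply Rdiv_lt_0_compat |]; apply Rpower_pos || lra).
  assert (Hroot : c * r ^ k <= (- u' r) ^ k).
  { pose proof (flux_le_neg_pow r Hp Hr) as Hf. rewrite flux_nonpos_eq in Hf by lra.
    replace (r ^ n) with (r ^ (n - k) * r ^ k) in Hf
      by (rewrite <- pow_add; f_equal; lia).
    apply (Rmult_le_reg_l (r ^ (n - k))); [apply pow_lt, Hr|]. fold c in Hf. nra. }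
  apply Rpower_inv_le in Hroot; [| exact k_pos | apply Rmult_lt_0_compat, pow_lt; lra | lra].
  rewrite Rpower_mul_pow_inv in Hroot by (exact k_pos || lra).
  unfold c in Hroot. rewrite <- Rpower_mult_distr, Rpower_mult in Hroot
    by (try apply Rdiv_lt_0_compat; apply Rpower_pos || lra).
  exact Hroot.
Qed.

Lemma u_upper_bound : INR k < p ->
  exists C2, 0 < C2 /\ forall r, 2 <= r -> u r <= C2 * Rpower r (- (2 * INR k / (p - INR k))).
Proof.
  intros Hp. assert (HK : 0 < INR k) by (apply lt_0_INR; lia).
  set (E := Rpower (kappa / INR n) (/ INR k)).
  exists (Rpower ((p / INR k - 1) * E / 4) (- / (p / INR k - 1))).
  split; [apply Rpower_pos|]. intros r Hr.
  replace (2 * INR k / (p - INR k)) with (2 / (p / INR k - 1)) by (field; lra).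
  apply (deriv_le_neg_superlinear_upper_bound u u'); try lra.
  - apply Rpower_pos.
  - apply (Rmult_lt_reg_r (INR k)); [exact HK|]. field_simplify; lra.
  - intros x Hx. apply u_deriv. lra.
  - intros x Hx. apply u_pos. lra.
  - intros x Hx. apply neg_u_deriv_ge; lra.
Qed.

Lemma u_lower_bound :
  exists C1, 0 < C1 /\
    forall r, 1 <= r -> C1 * Rpower r (- ((INR n - 2 * INR k) / INR k)) <= u r.
Proof.
  assert (HK : 0 < INR k) by (apply lt_0_INR; lia).
  set (q := - INR (n - k) / INR k). pose proof flux_exponent_lt as Hq. fold q in Hq.
  set (m := Rpower (- flux 1) (/ INR k)).
  assert (Hflux1 : 0 < - flux 1).
  { pose proof (u_deriv_neg 1 Rlt_0_1).
    rewrite flux_nonpos_eq by lra.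
    assert (0 < 1 ^ (n - k) * (- u' 1) ^ k) by (apply Rmult_lt_0_compat; apply pow_lt; lra).
    lra. }
  exists (m / - (q + 1)). split; [apply Rdiv_lt_0_compat; [apply Rpower_pos | lra]|].
  intros r Hr.
  replace (- ((INR n - 2 * INR k) / INR k)) with (q + 1)
    by (unfold q; rewrite minus_INR by lia; field; lra).
  apply (deriv_le_neg_power_lower_bound u u' 1); try lra.
  - apply Rpower_pos.
  - intros x Hx. apply u_deriv. lra.
  - intros x Hx. pose proof (u_deriv_neg x ltac:(lra)).
    assert (Hfx : flux x <= flux 1)
      by (destruct (Req_dec x 1) as [-> | Hne]; [lra | left; apply flux_decreasing; lra]).
    rewrite (flux_nonpos_eq x) in Hfx by lra.
    enough (m * Rpower x q <= - u' x) by lra.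
    apply Rpower_inv_le_weighted; lra || assumption.
  - intros x Hx. apply u_pos. lra.
Qed.

End RadialSolution.

Lemma solves_1_6_flux_deriv (n k : nat) (p rho : R) (u u' : R -> R) :
  (0 < k)%nat -> solves_1_6 n k p rho u u' ->
  forall r, 0 < r -> derivable_pt_lim (flux n k u') r
    (- (INR k / C (n - 1) (k - 1)) * r ^ (n - 1) * Rpower (u r) p).
Proof.
  intros Hk [_ [_ [Heq _]]] r Hr. destruct (Heq r Hr) as [d [Hd Ed]].
  replace (- (INR k / C (n - 1) (k - 1)) * r ^ (n - 1) * Rpower (u r) p) with d;
    [exact Hd|].
  pose proof (C_pos (n - 1) (k - 1)). assert (0 < INR k) by (apply lt_0_INR, Hk).
  rewrite Rmult_assoc, <- Ed. field. split; lra.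
Qed.

Lemma supercritical_exponent_gt (n k p : R) :
  0 < k -> 2 * k < n -> n * k / (n - 2 * k) < p -> k < p.
Proof.
  intros Hk Hn Hp. apply (Rlt_trans _ (n * k / (n - 2 * k))); [|exact Hp].
  apply (Rmult_lt_reg_r (n - 2 * k)); [lra|]. field_simplify; nra.
Qed.

Theorem lemma2p1 (n k : nat) (p rho : R) (u u' : R -> R) :
  (3 <= n)%nat -> (1 < k)%nat -> (2 * k < n)%nat ->
  INR n * INR k / (INR n - 2 * INR k) < p ->
  0 < rho ->
  solves_1_6 n k p rho u u' ->
  regular n u ->
  (forall r, 0 < r -> u' r < 0) /\
  (forall eps, 0 < eps -> exists R0, forall r, R0 < r -> Rabs (u r) < eps) /\
  (exists C1 C2 R0, 0 < C1 /\ 0 < C2 /\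
     forall r, R0 < r ->
       C1 * Rpower r (- ((INR n - 2 * INR k) / INR k)) <= u r /\
       u r <= C2 * Rpower r (- (2 * INR k / (p - INR k)))).
Proof.
  intros _ Hk Hn Hp _ Hsol _.
  assert (Hk0 : (0 < k)%nat) by lia.
  assert (HK : 0 < INR k) by (apply lt_0_INR, Hk0).
  assert (Hkp : INR k < p).
  { apply (supercritical_exponent_gt (INR n)); [exact HK | | exact Hp].
    rewrite <- (mult_INR 2). apply lt_INR, Hn. }
  pose proof (solves_1_6_flux_deriv n k p rho u u' Hk0 Hsol) as Hflux.
  destruct Hsol as [Hd [_ [_ [Hu _]]]].
  set (kappa := INR k / C (n - 1) (k - 1)) in Hflux.
  assert (Hkappa : 0 < kappa) by (apply Rdiv_lt_0_compat, C_pos; exact HK).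
  destruct (u_upper_bound n k p kappa u u' Hk0 Hn Hkappa Hd Hu Hflux Hkp) as [C2 [HC2 Hup]].
  destruct (u_lower_bound n k p kappa u u' Hk0 Hn Hkappa Hd Hu Hflux) as [C1 [HC1 Hlo]].
  split; [exact (u_deriv_neg n k p kappa u u' Hk0 Hn Hkappa Hd Hu Hflux)|]. split.
  - apply (vanishes_of_le_neg_power u C2 (- (2 * INR k / (p - INR k))) 2 HC2).
    + enough (0 < 2 * INR k / (p - INR k)) by lra. apply Rdiv_lt_0_compat; lra.
    + intros r Hr. split; [apply Hu | apply Hup]; lra.
  - exists C1, C2, 2. split; [exact HC1|]. split; [exact HC2|].
    intros r Hr. split; [apply Hlo | apply Hup]; lra.
Qed.
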